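(* Let $Q$ be a convex polytope in $\mathbb{R}^D$ with vertices in $\mathbb{Z}^D$, let $E$ be an edge of $Q$, and let $A\subset L(Q)$. Suppose $A\cap E = T_E(S)$, where $S\subset\mathbb{Z}$ and $T_E:\mathbb{R}\to\mathbb{R}^D$ is an injective affine transformation. Then there exists an injective affine transformation $T_{E+E}:\mathbb{R}\to\mathbb{R}^D$ such that $$(A+A)\cap (E+E) = T_{E+E}(S+S).$$
   Context: $L(Q) = Q\cap\mathbb{Z}^D$. For sets $X,Y$, $X+Y=\{x+y: x\in X,y\in Y\}$ (Minkowski sum). *)

From mathcomp Require Import all_boot all_order all_algebra.
From mathcomp Require Import boolp classical_sets reals.
Set Implicit Arguments. Unset Strict Implicit. Unset Printing Implicit Defensive.
Import Order.TTheory GRing.Theory Num.Theory.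
Local Open Scope ring_scope.
Local Open Scope classical_set_scope.

Section Defs.
Variable R : realType.
Variable D : nat.
Notation vec := 'rV[R]_D.

Definition dotv (x y : vec) : R := \sum_(i < D) x ord0 i * y ord0 i.

Definition lattice_pt (x : vec) : Prop := forall i : 'I_D, x ord0 i \is a Num.int.

Definition conv (V : seq vec) : set vec :=
  [set x | exists l : 'I_(size V) -> R,
     (forall i, 0 <= l i) /\ \sum_(i < size V) l i = 1 /\
     x = \sum_(i < size V) l i *: V`_i].

Definition lattice_polytope (Q : set vec) : Prop :=
  exists V : seq vec, (forall v, v \in V -> lattice_pt v) /\ Q = conv V.

Definition is_edge (Q E : set vec) : Prop :=
  (exists c : vec, E = [set x | Q x /\ forall y, Q y -> dotv c y <= dotv c x]) /\
  (exists u v : vec, u != v /\ E = conv [:: u; v]).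

Definition Lpts (Q : set vec) : set vec := [set x | Q x /\ lattice_pt x].

Definition affine_inj (T : R -> vec) : Prop :=
  (exists p w : vec, forall t, T t = p + t *: w) /\ injective T.

End Defs.

Definition sumset (V : zmodType) (X Y : set V) : set V :=
  [set z | exists x y, X x /\ Y y /\ z = x + y].

(* If a1 + a2 = e1 + e2 with a1, a2 in Q and e1, e2 in the face E of Q maximizing a linear
   functional f, then f a1 + f a2 = f e1 + f e2 is the largest value f can take on a sum, so
   a1 and a2 lie in E as well: (A + A) ∩ (E + E) = (A ∩ E) + (A ∩ E).  On A ∩ E = T_E(S), with
   T_E t = p + t w, the sum T_E(s1) + T_E(s2) = 2p + (s1 + s2) w is T_{E+E}(s1 + s2) for the
   injective affine map T_{E+E} t = p + T_E t. *)
From mathcomp Require Import all_boot all_order all_algebra.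
From mathcomp Require Import boolp classical_sets reals.
Set Implicit Arguments. Unset Strict Implicit. Unset Printing Implicit Defensive.
Import Order.TTheory GRing.Theory Num.Theory.
Local Open Scope ring_scope.
Local Open Scope classical_set_scope.

Lemma dotvD (R : realType) (D : nat) (c : 'rV[R]_D) : {morph dotv c : x y / x + y}.
Proof.
move=> x y; rewrite /dotv -big_split /=; apply: eq_bigr => i _.
by rewrite mxE mulrDr.
Qed.

Definition face_of (V : Type) (R : realDomainType) (f : V -> R) (Q : set V) : set V :=
  [set x | Q x /\ forall y, Q y -> f y <= f x].

Section FaceSumset.
Variables (V : zmodType) (R : realDomainType) (f : V -> R) (Q : set V).
Hypothesis fD : {morph f : x y / x + y}.
Local Notation F := (face_of f Q).

Lemma face_of_sum_meml (a1 a2 e1 e2 : V) :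
  Q a1 -> Q a2 -> F e1 -> F e2 -> a1 + a2 = e1 + e2 -> F a1.
Proof.
move=> Qa1 Qa2 [_ maxe1] [_ maxe2] sum_eq; split=> // y Qy.
have fsum : f a1 + f a2 = f e1 + f e2 by rewrite -!fD sum_eq.
have fa1 : f e1 <= f a1 by rewrite -(lerD2r (f a2)) fsum lerD2l maxe2.
exact: le_trans (maxe1 _ Qy) fa1.
Qed.

Lemma sumsetI_face (A B : set V) : A `<=` Q -> B `<=` Q ->
  sumset A B `&` sumset F F = sumset (A `&` F) (B `&` F).
Proof.
move=> AQ BQ; apply/seteqP; split=> z.
- move=> [[a [b [Aa [Bb ->]]]] [e1 [e2 [Fe1 [Fe2 sum_eq]]]]].
  have Fa : F a by exact: face_of_sum_meml (AQ _ Aa) (BQ _ Bb) Fe1 Fe2 sum_eq.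
  have Fb : F b.
    by apply: (face_of_sum_meml (BQ _ Bb) (AQ _ Aa) Fe2 Fe1); rewrite addrC sum_eq addrC.
  by exists a, b.
- by move=> [a [b [[Aa Fa] [[Bb Fb] ->]]]]; split; exists a, b.
Qed.

End FaceSumset.

Lemma sumset_image_morph (U V : zmodType) (g : U -> V) (X Y : set U) :
  {morph g : x y / x + y} -> g @` sumset X Y = sumset (g @` X) (g @` Y).
Proof.
move=> gD; apply/seteqP; split=> z.
- by move=> [_ [x [y [Xx [Yy ->]]]] <-]; exists (g x), (g y); rewrite gD.
- by move=> [_ [_ [[x Xx <-] [[y Yy <-] ->]]]]; exists (x + y); [exists x, y | rewrite gD].
Qed.

Lemma sumset_image_affine (U V : zmodType) (g : U -> V) (p : V) (X Y : set U) :
  {morph g : x y / x + y} ->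
  sumset ((fun t => p + g t) @` X) ((fun t => p + g t) @` Y) =
  (fun t => p + (p + g t)) @` sumset X Y.
Proof.
move=> gD; apply/seteqP; split=> z.
- move=> [_ [_ [[x Xx <-] [[y Yy <-] ->]]]]; exists (x + y); first by exists x, y.
  by rewrite gD addrA addrACA.
- move=> [_ [x [y [Xx [Yy ->]]]] <-]; exists (p + g x), (p + g y).
  by split; [exists x | split; [exists y | rewrite gD addrA addrACA]].
Qed.

Lemma affine_inj_translate (R : realType) (D : nat) (T : R -> 'rV[R]_D) (q : 'rV[R]_D) :
  affine_inj T -> affine_inj (fun t => q + T t).
Proof.
move=> [[p [w Tpw]] Tinj]; split; last by move=> t1 t2 /addrI /Tinj.
by exists (q + p), w => t; rewrite Tpw addrA.
Qed.

Theorem lemma4 (R : realType) (D : nat) (Q E A : set 'rV[R]_D) (S : set int)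
    (TE : R -> 'rV[R]_D) :
  lattice_polytope Q -> is_edge Q E -> A `<=` Lpts Q ->
  affine_inj TE ->
  A `&` E = TE @` ((fun s : int => s%:~R : R) @` S) ->
  exists TEE : R -> 'rV[R]_D, affine_inj TEE /\
    sumset A A `&` sumset E E = TEE @` ((fun s : int => s%:~R : R) @` sumset S S).
Proof.
move=> _ [[c ->] _] AL TEaff AE.
have AQ : A `<=` Q by move=> x /AL [].
have [[p [w TEpw]] _] := TEaff.
have TE_def : TE = (fun t => p + t *: w) := funext TEpw.
exists (fun t => p + (p + t *: w)); split.
  by have := affine_inj_translate p TEaff; rewrite TE_def.
rewrite (sumsetI_face (dotvD c)) // AE TE_def [in RHS]sumset_image_morph; last exact: intrD.
by rewrite sumset_image_affine //; exact: scalerDl.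
Qed.
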